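(* Let $\boldsymbol{\pi}\sim SP(\boldsymbol{\mu},\boldsymbol{\omega},\boldsymbol{\sigma},\psi,p_\text{b})$, where $p_\text{b}(\boldsymbol{\pi})>0$ for every partition $\boldsymbol{\pi}$ of $\{1,\dots,n\}$. Let $\boldsymbol{\omega}=\omega\times(s_1,\dots,s_n)$ with each $s_i\in\{0,1\}$, and let $\psi\in(0,1)$. Let $a=n-\sum_{i=1}^n s_i$ be the number of items with shrinkage equal to zero. Let $b$ be the number of clusters of $\boldsymbol{\mu}$ containing at least one item $i$ with $s_i=1$. Then, as $\omega\to\infty$, the number of limiting partitions of this SP distribution equals $B(a,b)$.
   Context: Partitions of $\{1,\dots,n\}$ are encoded as vectors of cluster labels $\boldsymbol{\pi}=(\pi_1,\dots,\pi_n)$ in canonical form: item 1 gets label 1, and each subsequent item that is not clustered with an earlier item gets the next unused integer. Two items share a label iff they are in the same cluster. Shrinkage partition (SP) distribution. The ingredients are: - an anchor partition $\boldsymbol{\mu}=(\mu_1,\dots,\mu_n)$; - a shrinkage vector $\boldsymbol{\omega}=(\omega_1,\dots,\omega_n)$ with $\omega_i\ge0$; - a permutation $\boldsymbol{\sigma}$ of $\{1,\dots,n\}$, giving the allocation order (the $k$-th item allocated is $\sigma_k$); - a grit parameter $\psi\in\mathbb{R}$; - a baseline partition distribution $p_\text{b}$ given by a conditional allocation probability function $\Pr_\text{b}(\pi_{\sigma_k}=c\mid\pi_{\sigma_1},\dots,\pi_{\sigma_{k-1}})$, so that $p_\text{b}(\boldsymbol{\pi})=\prod_k\Pr_\text{b}(\pi_{\sigma_k}\mid\cdot)$.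 At step $k\ge2$, the admissible values of $c$ are the existing labels $\{\pi_{\sigma_1},\dots,\pi_{\sigma_{k-1}}\}$ and the new label $|\{\pi_{\sigma_1},\dots,\pi_{\sigma_{k-1}}\}|+1$. The anchor factor is $$\Pr_\text{a}(\pi_{\sigma_k}=c\mid\cdot)\propto\exp\!\Big(\frac{\omega_{\sigma_k}}{(k-1)^2}\Big[\Big(\sum_{j=1}^{k-1}\omega_{\sigma_j}I\{\pi_{\sigma_j}=c\}I\{\mu_{\sigma_j}=\mu_{\sigma_k}\}\Big)^2-\psi\Big(\sum_{j=1}^{k-1}\omega_{\sigma_j}I\{\pi_{\sigma_j}=c\}\Big)^2\Big]\Big).$$ The SP allocation probability is $\Pr_\text{sp}(\pi_{\sigma_k}=c\mid\cdot)\propto\Pr_\text{b}(\pi_{\sigma_k}=c\mid\cdot)\Pr_\text{a}(\pi_{\sigma_k}=c\mid\cdot)$, normalized over the admissible $c$. The first item gets label 1. The pmf is $\prod_{k=2}^n\Pr_\text{sp}(\pi_{\sigma_k}\mid\cdot)$, and this distribution is denoted $SP(\boldsymbol{\mu},\boldsymbol{\omega},\boldsymbol{\sigma},\psi,p_\text{b})$. Limiting partition: for $\boldsymbol{\omega}=\omega\times(s_1,\dots,s_n)$ with fixed scalars $s_i$, a partition is a limiting partition if its probability has a non-zero limit as $\omega\to\infty$. Extended Bell numbers: $B(a,b)$ for nonnegative integers $a,b$ is defined by $B(0,b)=1$ and $B(a+1,b)=b\,B(a,b)+B(a,b+1)$. Equivalently, $B(a,b)$ is the number of ways to allocate $a$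 items among $b$ already-existing clusters, allowing new clusters to be formed; $B(a,0)$ is the $a$-th Bell number. *)

From HB Require Import structures.
From mathcomp Require Import all_boot all_order all_algebra all_fingroup.
From mathcomp Require Import all_classical all_reals all_analysis.
Set Implicit Arguments. Unset Strict Implicit. Unset Printing Implicit Defensive.
Import Order.TTheory GRing.Theory Num.Theory.
Import numFieldNormedType.Exports.
Local Open Scope classical_set_scope.
Local Open Scope ring_scope.

(* Conventions: items are 'I_n = {0,...,n-1} (item i+1 of the paper is i);
   labels are 0-based (label c+1 of the paper is c).  A partition is a
   label vector p : {ffun 'I_n -> 'I_n} in canonical form. *)

Definition prev_labels n (p : {ffun 'I_n -> 'I_n}) (i : 'I_n) : seq 'I_n :=
  [seq p j | j : 'I_n <- enum 'I_n & (val j < val i)%N].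

Definition canon_part n (p : {ffun 'I_n -> 'I_n}) : bool :=
  [forall i : 'I_n, (p i \in prev_labels p i)
                    || (val (p i) == size (undup (prev_labels p i)))].

Definition alloc_seq n (p : {ffun 'I_n -> 'I_n}) (sigma : {perm 'I_n}) : seq 'I_n :=
  [seq p (sigma k) | k <- enum 'I_n].

(* label of the k-th allocated item when the partition is labelled
   canonically in allocation order (0-based): the number of distinct
   clusters seen before the first occurrence of its cluster *)
Definition alloc_label n (p : {ffun 'I_n -> 'I_n}) (sigma : {perm 'I_n}) (k : 'I_n) : nat :=
  let s := alloc_seq p sigma in
  size (undup (take (index (p (sigma k)) s) s)).

Definition alloc_prefix n (p : {ffun 'I_n -> 'I_n}) (sigma : {perm 'I_n}) (k : 'I_n) : seq nat :=
  [seq alloc_label p sigma j | j : 'I_n <- enum 'I_n & (val j < val k)%N].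

(* number of existing clusters at step k; admissible labels are 0..m *)
Definition n_existing n (p : {ffun 'I_n -> 'I_n}) (sigma : {perm 'I_n}) (k : 'I_n) : nat :=
  size (undup (alloc_prefix p sigma k)).

Section SP.
Variable R : realType.

(* A baseline partition distribution is given by its conditional allocation
   probabilities: prb k prefix c = Pr_b(label of sigma_k = c | labels of
   sigma_0..sigma_(k-1) = prefix). *)
Definition baseline_pmf n (prb : nat -> seq nat -> nat -> R) (sigma : {perm 'I_n})
  (p : {ffun 'I_n -> 'I_n}) : R :=
  \prod_(k : 'I_n | (0 < k)%N) prb k (alloc_prefix p sigma k) (alloc_label p sigma k).

(* anchor factor (unnormalized) for step k (0-based, so k = (paper's k) - 1) *)
Definition anchor_factor n (mu : {ffun 'I_n -> 'I_n}) (w : 'I_n -> R)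
  (sigma : {perm 'I_n}) (psi : R) (p : {ffun 'I_n -> 'I_n}) (k : 'I_n) (c : nat) : R :=
  expR (w (sigma k) / (k%:R ^+ 2) *
    ((\sum_(j : 'I_n | (j < k)%N)
        w (sigma j) * ((alloc_label p sigma j == c) && (mu (sigma j) == mu (sigma k)))%:R) ^+ 2
     - psi * (\sum_(j : 'I_n | (j < k)%N)
        w (sigma j) * (alloc_label p sigma j == c)%:R) ^+ 2)).

Definition sp_cond n (mu : {ffun 'I_n -> 'I_n}) (w : 'I_n -> R) (sigma : {perm 'I_n})
  (psi : R) (prb : nat -> seq nat -> nat -> R) (p : {ffun 'I_n -> 'I_n}) (k : 'I_n) (c : nat) : R :=
  prb k (alloc_prefix p sigma k) c * anchor_factor mu w sigma psi p k c /
  \sum_(c' < (n_existing p sigma k).+1)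
     prb k (alloc_prefix p sigma k) c' * anchor_factor mu w sigma psi p k c'.

Definition sp_pmf n (mu : {ffun 'I_n -> 'I_n}) (w : 'I_n -> R) (sigma : {perm 'I_n})
  (psi : R) (prb : nat -> seq nat -> nat -> R) (p : {ffun 'I_n -> 'I_n}) : R :=
  \prod_(k : 'I_n | (0 < k)%N) sp_cond mu w sigma psi prb p k (alloc_label p sigma k).

Definition valid_baseline n (prb : nat -> seq nat -> nat -> R) (sigma : {perm 'I_n}) : Prop :=
  forall p : {ffun 'I_n -> 'I_n}, canon_part p -> forall k : 'I_n, (0 < k)%N ->
    (forall c, (c <= n_existing p sigma k)%N -> 0 <= prb k (alloc_prefix p sigma k) c) /\
    \sum_(c < (n_existing p sigma k).+1) prb k (alloc_prefix p sigma k) c = 1.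

Definition limiting n (mu : {ffun 'I_n -> 'I_n}) (s : 'I_n -> bool) (sigma : {perm 'I_n})
  (psi : R) (prb : nat -> seq nat -> nat -> R) (p : {ffun 'I_n -> 'I_n}) : Prop :=
  exists l : R, l != 0 /\
    sp_pmf mu (fun i => om * (s i)%:R) sigma psi prb p @[om --> +oo] --> l.

End SP.

Fixpoint ext_bell (a b : nat) : nat :=
  match a with
  | 0 => 1
  | a'.+1 => b * ext_bell a' b + ext_bell a' b.+1
  end%N.

(* With [omega = om * s], the anchor factor of step [k] is [expR (om ^+ 3 * score)],
   so every allocation probability is a softmax in [om ^+ 3]: its limit is non-zero
   iff the chosen label maximises the score, since the baseline gives every
   admissible label positive weight.  For [0 < psi < 1], a partition that clusters
   the items with [s = 1] exactly as the anchor does chooses a maximiser at every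
   step; otherwise, at the first step violating this, the cluster of an earlier
   anchor-mate, or else a new cluster, scores strictly more.  Hence the limiting
   partitions are the partitions agreeing with the anchor on the items with [s = 1].
   Fixing the cluster of one free item (one of the [b] anchor clusters, or a new one
   that then counts as an anchor cluster) gives [B(a+1, b) = b B(a, b) + B(a, b+1)]. *)

From HB Require Import structures.
From mathcomp Require Import all_boot all_order all_algebra all_fingroup.
From mathcomp Require Import all_classical all_reals all_analysis.
From mathcomp Require Import ring lra.
Import Order.TTheory GRing.Theory Num.Theory.

Set Implicit Arguments. Unset Strict Implicit. Unset Printing Implicit Defensive.

(** * Canonical labels *)

Section CanonLabel.
Variable T : eqType.

Definition canon_label (S : seq T) (x : T) : nat := size (undup (take (index x S) S)).

Lemma leq_size_undup (s t : seq T) : {subset s <= t} -> size (undup s) <= size (undup t).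
Proof.
move=> st; apply: uniq_leq_size; first exact: undup_uniq.
by move=> x; rewrite !mem_undup => /st.
Qed.

Lemma ltn_size_undup (s t : seq T) x :
  {subset s <= t} -> x \in t -> x \notin s -> size (undup s) < size (undup t).
Proof.
move=> st xt xs; apply: (@uniq_leq_size _ (x :: undup s)).
  by rewrite /= mem_undup xs undup_uniq.
by move=> y; rewrite inE !mem_undup => /predU1P[->|/st].
Qed.

Lemma eq_size_undup (s t : seq T) : s =i t -> size (undup s) = size (undup t).
Proof. by move=> st; apply/eqP; rewrite eqn_leq !leq_size_undup // => x; rewrite st. Qed.

Lemma canon_label_le (S : seq T) m x :
  index x S <= m -> canon_label S x <= size (undup (take m S)).
Proof.
by move=> xm; apply: leq_size_undup => y; rewrite -(take_takel _ xm); apply: mem_take.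
Qed.

Lemma canon_label_lt (S : seq T) m x :
  x \in take m S -> canon_label S x < size (undup (take m S)).
Proof.
move=> xm; have xS := mem_take xm; have ltxm : index x S < m by rewrite -in_take.
apply: (ltn_size_undup (x := x)) => //; last by rewrite in_take // ltnn.
by move=> y; rewrite -(take_takel _ (ltnW ltxm)); apply: mem_take.
Qed.

Lemma canon_label_take (S : seq T) m x :
  x \in take m S -> canon_label S x = canon_label (take m S) x.
Proof.
move=> xm; have xS := mem_take xm; have ltxm : index x S < m by rewrite -in_take.
have idx_take : index x (take m S) = index x S.
  by rewrite -[in RHS](cat_take_drop m S) index_cat xm.
by rewrite /canon_label idx_take take_takel // ltnW.
Qed.

Lemma eq_canon_label (S : seq T) x y :
  x \in S -> y \in S -> (canon_label S x == canon_label S y) = (x == y).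
Proof.
have lt_label u v : u \in S -> index u S < index v S -> canon_label S u < canon_label S v.
  by move=> uS uv; apply: canon_label_lt; rewrite in_take.
move=> xS yS; case: (ltngtP (index x S) (index y S)) => [xy|yx|xy].
- by rewrite ltn_eqF ?lt_label //; apply/esym/negP => /eqP exy; rewrite exy ltnn in xy.
- by rewrite gtn_eqF ?lt_label //; apply/esym/negP => /eqP exy; rewrite exy ltnn in yx.
- by rewrite -(nth_index x xS) xy (nth_index x yS) !eqxx.
Qed.

End CanonLabel.

Section KernelInvariance.
Variables (A B C : eqType) (f : A -> B) (g : A -> C).

Lemma index_map_kernel (t : seq A) x :
  {in t &, forall a b, (f a == f b) = (g a == g b)} -> x \in t ->
  index (f x) (map f t) = index (g x) (map g t).
Proof.
elim: t => //= a t IH fg; rewrite inE => /predU1P[->|xt]; first by rewrite !eqxx.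
rewrite (fg a x) ?inE ?eqxx ?xt ?orbT // IH // => u v ut vt.
by apply: fg; rewrite inE ?ut ?vt orbT.
Qed.

Lemma size_undup_map_kernel (t : seq A) :
  {in t &, forall a b, (f a == f b) = (g a == g b)} ->
  size (undup (map f t)) = size (undup (map g t)).
Proof.
elim: t => //= a t IH fg.
have fg' : {in t &, forall a b, (f a == f b) = (g a == g b)}.
  by move=> u v ut vt; apply: fg; rewrite inE ?ut ?vt orbT.
have -> : (f a \in map f t) = (g a \in map g t).
  apply/mapP/mapP => -[y yt e]; exists y => //; apply/eqP.
    by rewrite -fg ?inE ?eqxx ?yt ?orbT // e.
  by rewrite fg ?inE ?eqxx ?yt ?orbT // e.
by case: ifP => _ /=; rewrite IH.
Qed.

Lemma canon_label_map_kernel (t : seq A) x :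
  {in t &, forall a b, (f a == f b) = (g a == g b)} -> x \in t ->
  canon_label (map f t) (f x) = canon_label (map g t) (g x).
Proof.
move=> fg xt; rewrite /canon_label (index_map_kernel fg xt) -!map_take.
by apply: size_undup_map_kernel => u v /mem_take ut /mem_take vt; apply: fg.
Qed.

End KernelInvariance.

Lemma mem_take_enum_ord n m (j : 'I_n) : (j \in take m (enum 'I_n)) = (j < m).
Proof. by rewrite in_take ?mem_enum // index_enum_ord. Qed.

Section OrdLabel.
Variables (n : nat) (T : eqType) (f : 'I_n -> T).

Definition ord_label (k : 'I_n) : nat := canon_label (map f (enum 'I_n)) (f k).

Definition nvalues_before (k : 'I_n) : nat :=
  size (undup [seq f j | j : 'I_n <- enum 'I_n & (val j < val k)%N]).

Lemma nvalues_beforeE (k : 'I_n) :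
  nvalues_before k = size (undup (take k (map f (enum 'I_n)))).
Proof.
apply: eq_size_undup => x; rewrite -map_take.
apply/mapP/mapP => -[j jk ->]; exists j => //.
  by rewrite mem_take_enum_ord; move: jk; rewrite mem_filter => /andP[].
by rewrite mem_filter mem_enum andbT -mem_take_enum_ord.
Qed.

Lemma mem_take_map_enum_ord m (j : 'I_n) : j < m -> f j \in take m (map f (enum 'I_n)).
Proof. by move=> jm; rewrite -map_take map_f // mem_take_enum_ord. Qed.

Lemma index_map_enum_ord (k : 'I_n) : index (f k) (map f (enum 'I_n)) <= k.
Proof. by rewrite -ltnS -in_take ?mem_take_map_enum_ord // map_f ?mem_enum. Qed.

Lemma ord_label_le (k : 'I_n) : ord_label k <= nvalues_before k.
Proof. by rewrite nvalues_beforeE canon_label_le ?index_map_enum_ord. Qed.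

Lemma ord_label_lt (j k : 'I_n) : j < k -> ord_label j < nvalues_before k.
Proof. by move=> jk; rewrite nvalues_beforeE; apply/canon_label_lt/mem_take_map_enum_ord. Qed.

Lemma ord_label_new (k : 'I_n) :
  (forall j : 'I_n, j < k -> f j != f k) -> ord_label k = nvalues_before k.
Proof.
move=> fresh; rewrite nvalues_beforeE /ord_label /canon_label.
congr (size (undup (take _ _))); apply/eqP; rewrite eqn_leq index_map_enum_ord.
rewrite leqNgt -in_take ?map_f ?mem_enum // -map_take; apply/negP => /mapP[j].
by rewrite mem_take_enum_ord => /fresh + fkj; rewrite fkj eqxx.
Qed.

Lemma eq_ord_label (j k : 'I_n) : (ord_label j == ord_label k) = (f j == f k).
Proof. by rewrite eq_canon_label ?map_f ?mem_enum. Qed.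

Lemma ord_label_lt_n (k : 'I_n) : ord_label k < n.
Proof.
apply: leq_ltn_trans (ord_label_le k) _; rewrite nvalues_beforeE.
by apply: leq_ltn_trans (size_undup _) _; rewrite size_take size_map size_enum_ord ltn_ord.
Qed.

End OrdLabel.

Section OrdLabelKernel.
Variables (n : nat) (T1 T2 : eqType) (f : 'I_n -> T1) (g : 'I_n -> T2).

Lemma ord_label_kernel m (j : 'I_n) :
  (forall a b : 'I_n, a < m -> b < m -> (f a == f b) = (g a == g b)) -> j < m ->
  ord_label f j = ord_label g j.
Proof.
move=> fg jm; rewrite /ord_label.
rewrite (canon_label_take (m := m)) ?mem_take_map_enum_ord //.
rewrite [RHS](canon_label_take (m := m)) ?mem_take_map_enum_ord //.
have take_mapE (T : eqType) (h : 'I_n -> T) :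
  take m (map h (enum 'I_n)) = map h (take m (enum 'I_n)) by rewrite map_take.
rewrite !take_mapE; apply: canon_label_map_kernel; last by rewrite mem_take_enum_ord.
by move=> a b; rewrite !mem_take_enum_ord; apply: fg.
Qed.

Lemma nvalues_before_kernel (k : 'I_n) :
  (forall a b : 'I_n, a < k -> b < k -> (f a == f b) = (g a == g b)) ->
  nvalues_before f k = nvalues_before g k.
Proof.
move=> fg; apply: size_undup_map_kernel => a b.
by rewrite !mem_filter => /andP[ak _] /andP[bk _]; apply: fg.
Qed.

End OrdLabelKernel.

Section Alloc.
Variables (n : nat) (p : {ffun 'I_n -> 'I_n}) (sigma : {perm 'I_n}).

Lemma eq_alloc_label (j k : 'I_n) :
  (alloc_label p sigma j == alloc_label p sigma k) = (p (sigma j) == p (sigma k)).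
Proof. exact: (eq_ord_label (fun k => p (sigma k))). Qed.

Lemma n_existingE (k : 'I_n) : n_existing p sigma k = nvalues_before (fun j => p (sigma j)) k.
Proof. by apply: nvalues_before_kernel => a b _ _; apply: eq_alloc_label. Qed.

Lemma alloc_label_le (k : 'I_n) : alloc_label p sigma k <= n_existing p sigma k.
Proof. by rewrite n_existingE; apply: (ord_label_le (fun k => p (sigma k))). Qed.

Lemma alloc_label_lt (j k : 'I_n) : j < k -> alloc_label p sigma j < n_existing p sigma k.
Proof. by rewrite n_existingE; apply: (ord_label_lt (fun k => p (sigma k))). Qed.

Lemma alloc_label_new (k : 'I_n) :
  (forall j : 'I_n, j < k -> p (sigma j) != p (sigma k)) ->
  alloc_label p sigma k = n_existing p sigma k.
Proof. by rewrite n_existingE; apply: (ord_label_new (f := fun k => p (sigma k))). Qed.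

End Alloc.

Section AllocPrefix.
Variables (n : nat) (p p' : {ffun 'I_n -> 'I_n}) (sigma : {perm 'I_n}) (k : 'I_n).
Hypothesis same_prefix : forall a b : 'I_n, a < k -> b < k ->
  (p (sigma a) == p (sigma b)) = (p' (sigma a) == p' (sigma b)).

Lemma alloc_label_prefix (j : 'I_n) : j < k -> alloc_label p sigma j = alloc_label p' sigma j.
Proof. exact: (ord_label_kernel (f := fun k => p (sigma k)) (g := fun k => p' (sigma k))). Qed.

Lemma alloc_prefix_prefix : alloc_prefix p sigma k = alloc_prefix p' sigma k.
Proof.
by apply/eq_in_map => j; rewrite mem_filter => /andP[jk _]; apply: alloc_label_prefix.
Qed.

End AllocPrefix.

Section Canonize.
Variable n : nat.

Definition canonize (T : eqType) (q : 'I_n -> T) : {ffun 'I_n -> 'I_n} :=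
  [ffun i => Ordinal (ord_label_lt_n q i)].

Lemma eq_canonize (T : eqType) (q : 'I_n -> T) x y :
  (canonize q x == canonize q y) = (q x == q y).
Proof. by rewrite !ffunE -val_eqE /= eq_ord_label. Qed.

Lemma canon_part_canonize (T : eqType) (q : 'I_n -> T) : canon_part (canonize q).
Proof.
apply/forallP => i; case: (pickP [pred j : 'I_n | (j < i) && (q j == q i)]) => [j|fresh].
  move=> /andP[ji qji]; apply/orP; left; apply/mapP; exists j.
    by rewrite mem_filter ji mem_enum.
  by apply/eqP; rewrite eq_canonize eq_sym.
apply/orP; right; rewrite ffunE /= ord_label_new.
  by apply/eqP/nvalues_before_kernel => a b _ _; rewrite eq_canonize.
by move=> j ji; apply/negP => qji; have /= := fresh j; rewrite ji qji.
Qed.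

Lemma canon_partE (p : {ffun 'I_n -> 'I_n}) (i : 'I_n) :
  canon_part p -> val (p i) = ord_label p i.
Proof.
move=> /forallP cp; suff {i} : forall m (i : 'I_n), i < m -> val (p i) = ord_label p i.
  by apply.
elim=> // m IH i im; case: (boolP (p i \in prev_labels p i)) => [/mapP[j]|fresh].
  rewrite mem_filter mem_enum andbT => ji pij.
  have /eqP <- : ord_label p j == ord_label p i by rewrite eq_ord_label pij.
  by rewrite pij IH // (leq_trans ji im).
have /orP[|/eqP ->] := cp i; first by rewrite (negbTE fresh).
rewrite ord_label_new // => j ji; apply: contraNneq fresh => <-.
by rewrite map_f // mem_filter ji mem_enum.
Qed.

Lemma canonize_id (p : {ffun 'I_n -> 'I_n}) : canon_part p -> canonize p = p.
Proof. by move=> cp; apply/ffunP => i; apply: val_inj; rewrite ffunE /= canon_partE. Qed.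

Lemma canonize_kernel (T1 T2 : eqType) (q1 : 'I_n -> T1) (q2 : 'I_n -> T2) :
  (forall x y, (q1 x == q1 y) = (q2 x == q2 y)) -> canonize q1 = canonize q2.
Proof.
move=> q12; apply/ffunP => i; apply: val_inj; rewrite !ffunE /=.
by apply: (ord_label_kernel (m := n)) => // a b _ _; apply: q12.
Qed.

End Canonize.

(** * Counting partitions consistent with an anchor *)

Section ConsistentPartitions.
Variable n : nat.

Definition consistent (T : eqType) (s : 'I_n -> bool) (mu : 'I_n -> T)
    (p : {ffun 'I_n -> 'I_n}) : bool :=
  [forall x, forall y, s x ==> s y ==> ((p x == p y) == (mu x == mu y))].

Lemma consistentP (T : eqType) (s : 'I_n -> bool) (mu : 'I_n -> T) (p : {ffun 'I_n -> 'I_n}) :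
  reflect (forall x y, s x -> s y -> (p x == p y) = (mu x == mu y)) (consistent s mu p).
Proof.
apply: (iffP forallP) => [C x y sx sy|C x].
  by move: (C x) => /forallP/(_ y); rewrite sx sy => /eqP.
by apply/forallP => y; apply/implyP => sx; apply/implyP => sy; rewrite C.
Qed.

Definition consistent_parts (T : eqType) (s : 'I_n -> bool) (mu : 'I_n -> T) :
    {set {ffun 'I_n -> 'I_n}} :=
  [set p | canon_part p && consistent s mu p].

Definition anchor_values (T : finType) (s : 'I_n -> bool) (mu : 'I_n -> T) : {set T} :=
  [set mu i | i in [set i | s i]].

Lemma consistent_parts_all (T : eqType) (s : 'I_n -> bool) (mu : 'I_n -> T) :
  (forall i, s i) -> consistent_parts s mu = [set canonize mu].
Proof.
move=> all_s; apply/setP => p; rewrite !inE; apply/andP/eqP => [[cp /consistentP C]|->].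
  by rewrite -(canonize_id cp); apply: canonize_kernel => x y; rewrite C.
by split; [exact: canon_part_canonize | apply/consistentP => x y _ _; rewrite eq_canonize].
Qed.

Section AttachFreeItem.
Variables (T : finType) (s : 'I_n -> bool) (mu : 'I_n -> T) (z : 'I_n).
Hypothesis free_z : ~~ s z.

Local Notation V := (anchor_values s mu).
Local Notation s_z := (fun i => s i || (i == z)).

Definition anchor_at (m : option T) (i : 'I_n) : option T := if i == z then m else Some (mu i).

Definition attach (p : {ffun 'I_n -> 'I_n}) : option T :=
  if [pick y | s y && (p y == p z)] is Some y then Some (mu y) else None.

Lemma anchor_atE m i : s i -> anchor_at m i = Some (mu i).
Proof. by move=> si; rewrite /anchor_at ifN //; apply: contraNneq free_z => <-. Qed.

Lemma consistent_anchor_at m p :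
  consistent s_z (anchor_at m) p =
  consistent s mu p && [forall y, s y ==> ((p z == p y) == (m == Some (mu y)))].
Proof.
apply/consistentP/andP => [C|[/consistentP C /forallP Cz]].
  split; first by apply/consistentP => x y sx sy; rewrite C ?sx ?sy // !anchor_atE.
  apply/forallP => y; apply/implyP => sy.
  by rewrite C ?eqxx ?sy ?orbT // (anchor_atE _ sy) /anchor_at eqxx.
have Cz' y : s y -> (p z == p y) = (m == Some (mu y)).
  by move=> sy; have /implyP/(_ sy)/eqP := Cz y.
move=> x y /orP[sx|/eqP->] /orP[sy|/eqP->].
- by rewrite C // !anchor_atE.
- by rewrite eq_sym Cz' // (anchor_atE _ sx) /anchor_at eqxx eq_sym.
- by rewrite Cz' // (anchor_atE _ sy) /anchor_at eqxx.
- by rewrite !eqxx.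
Qed.

Lemma attach_mem p : attach p \in None |: (Some @: V).
Proof.
rewrite /attach; case: pickP => [y /andP[sy _]|_]; rewrite !inE ?eqxx //.
by apply/orP; right; apply: imset_f; apply: imset_f; rewrite inE.
Qed.

Lemma attach_spec m p : m \in None |: (Some @: V) -> consistent s mu p ->
  [forall y, s y ==> ((p z == p y) == (m == Some (mu y)))] = (attach p == m).
Proof.
move=> mM /consistentP C; rewrite /attach; case: pickP => [y /andP[sy pyz]|none].
  apply/forallP/eqP => [/(_ y)|<- y'].
    by rewrite sy (eq_sym (p z)) pyz => /eqP/esym/eqP ->.
  by apply/implyP => sy'; rewrite -(eqP pyz) C.
apply/forallP/eqP => [Cz|<- y]; last first.
  by apply/implyP => sy; move: (none y); rewrite sy eq_sym /= => ->.
case: m mM Cz => // v /setU1P[//|/imsetP[_ /imsetP[y + ->] [->]]]; rewrite inE => sy /(_ y).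
by rewrite sy eqxx => /eqP pzy; move: (none y); rewrite sy eq_sym pzy.
Qed.

Lemma card_anchor_values_at m :
  #|anchor_values s_z (anchor_at m)| = ((m \notin Some @: V) + #|V|)%N.
Proof.
rewrite /anchor_values.
have -> : [set i | s_z i] = z |: [set i | s i] by apply/setP => i; rewrite !inE orbC.
rewrite imsetU1.
have -> : [set anchor_at m i | i in [set i | s i]] = Some @: V.
  by rewrite -imset_comp; apply: eq_in_imset => i; rewrite inE; apply: anchor_atE.
by rewrite cardsU1 card_imset /anchor_at ?eqxx //; apply: Some_inj.
Qed.

Lemma card_consistent_parts_split :
  #|consistent_parts s mu| =
  (\sum_(m in None |: Some @: V) #|consistent_parts s_z (anchor_at m)|)%N.
Proof.
rewrite -sum1_card (partition_big attach (mem (None |: Some @: V))) => [|p _]; last first.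
  exact: attach_mem.
apply: eq_bigr => m mM; rewrite -sum1_card; apply: eq_bigl => p.
rewrite !inE consistent_anchor_at; case: (canon_part p) => //=.
by case C: (consistent s mu p); rewrite //= attach_spec.
Qed.

End AttachFreeItem.

Lemma card_consistent_parts (T : finType) (s : 'I_n -> bool) (mu : 'I_n -> T) :
  #|consistent_parts s mu| = ext_bell #|[set i | ~~ s i]| #|anchor_values s mu|.
Proof.
move ha: #|[set i | ~~ s i]| => a; elim: a T s mu ha => [|a IH] T s mu ha.
  rewrite consistent_parts_all ?cards1 // => i; apply/negPn/negP => nsi.
  by move/eqP: ha; rewrite cards_eq0 => /eqP/setP/(_ i); rewrite !inE nsi.
have [z] : exists z, z \in [set i | ~~ s i] by apply/card_gt0P; rewrite ha.
rewrite inE => free_z; rewrite (card_consistent_parts_split mu free_z).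
have ha' : #|[set i | ~~ (s i || (i == z))]| = a.
  apply/eq_add_S; rewrite -ha (cardsD1 z [set i | ~~ s i]) inE free_z add1n; congr _.+1.
  by apply: eq_card => i; rewrite !inE negb_or andbC.
set V := anchor_values s mu.
rewrite (eq_bigr (fun m => ext_bell a ((m \notin Some @: V) + #|V|))); last first.
  by move=> m _; rewrite (IH _ _ _ ha') (card_anchor_values_at mu free_z).
have None_notin : None \notin Some @: V by apply/imsetP => -[].
rewrite big_setU1 // None_notin big_imset; last by move=> x y _ _ [].
rewrite (eq_bigr (fun=> ext_bell a #|V|)) => [|v vV]; last by rewrite (imset_f Some vV).
by rewrite sum_nat_const [RHS]addnC.
Qed.

End ConsistentPartitions.

(** * Softmax limits *)

Section Softmax.
Import numFieldNormedType.Exports.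
Local Open Scope classical_set_scope.
Local Open Scope ring_scope.
Variable R : realType.

Lemma cvg_expR_Mneg (d : R) : d < 0 -> expR (t * d) @[t --> +oo] --> 0.
Proof.
move=> d_lt0; have -> : (fun t => expR (t * d)) = (fun y => expR (- y)) \o (fun t => t * - d).
  by apply/funext => t /=; rewrite mulrN opprK.
apply: cvg_comp (@cvgr_expR R); apply/cvgryPge => A; near=> t.
rewrite -ler_pdivrMr ?oppr_gt0 //; near: t; apply: nbhs_pinfty_ge; exact: num_real.
Unshelve. all: end_near. Qed.

Lemma cvgr_expr_pinfty k : (0 < k)%N -> (x ^+ k : R) @[x --> +oo] --> +oo.
Proof.
move=> k_gt0; apply: (ger_cvgy _ cvg_id); near=> x; rewrite ler_eXnr //.
Unshelve. all: end_near. Qed.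

Lemma cvg_pinfty_comp_expr (f : R -> R) (l : R) k :
  (0 < k)%N -> f t @[t --> +oo] --> l -> f (x ^+ k) @[x --> +oo] --> l.
Proof. by move=> k_gt0; apply: cvg_comp (cvgr_expr_pinfty k_gt0). Qed.

Variables (m : nat) (w b : nat -> R).
Hypothesis w_ge0 : forall c, (c <= m)%N -> 0 <= w c.

Definition softmax (c : nat) (t : R) : R :=
  w c * expR (t * b c) / \sum_(c' < m.+1) w c' * expR (t * b c').

Definition softmax_lim (c : nat) : R :=
  w c / \sum_(c' < m.+1) (if b c' == b c then w c' else 0).

Lemma softmax_num_le_den c t : (c <= m)%N ->
  w c * expR (t * b c) <= \sum_(c' < m.+1) w c' * expR (t * b c').
Proof.
move=> cm; rewrite (bigD1 (Ordinal (cm : c < m.+1)%N)) //= lerDl.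
by apply: sumr_ge0 => i _; rewrite mulr_ge0 ?expR_ge0 // w_ge0 // -ltnS.
Qed.

Lemma softmax_ge0 c t : (c <= m)%N -> 0 <= softmax c t.
Proof.
move=> cm; have num_ge0 : 0 <= w c * expR (t * b c) by rewrite mulr_ge0 ?expR_ge0 ?w_ge0.
by rewrite divr_ge0 // (le_trans num_ge0) ?softmax_num_le_den.
Qed.

Lemma softmax_le1 c t : (c <= m)%N -> softmax c t <= 1.
Proof.
move=> cm; have := softmax_num_le_den t cm; rewrite /softmax.
set D := \sum_(_ < _) _ => numD; have [->|D_neq0] := eqVneq D 0; first by rewrite invr0 mulr0.
have num_ge0 : 0 <= w c * expR (t * b c) by rewrite mulr_ge0 ?expR_ge0 ?w_ge0.
by rewrite ler_pdivrMr ?mul1r // lt_neqAle eq_sym D_neq0 (le_trans num_ge0).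
Qed.

Lemma sum_ties_gt0 c : (c <= m)%N -> 0 < w c ->
  0 < \sum_(c' < m.+1) (if b c' == b c then w c' else 0).
Proof.
move=> cm wc_gt0; rewrite (bigD1 (Ordinal (cm : c < m.+1)%N)) //= eqxx.
rewrite (lt_le_trans wc_gt0) // lerDl.
by apply: sumr_ge0 => i _; case: ifP => // _; rewrite w_ge0 // -ltnS.
Qed.

Lemma softmax_lim_neq0 c : (c <= m)%N -> 0 < w c -> softmax_lim c != 0.
Proof. by move=> cm wc_gt0; rewrite mulf_neq0 ?invr_eq0 ?gt_eqF ?sum_ties_gt0. Qed.

Lemma softmax_cvg_argmax c : (c <= m)%N -> 0 < w c ->
  (forall c', (c' <= m)%N -> b c' <= b c) ->
  softmax c t @[t --> +oo] --> softmax_lim c.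
Proof.
move=> cm wc_gt0 b_max.
have shift t : softmax c t = w c / \sum_(c' < m.+1) w c' * expR (t * (b c' - b c)).
  rewrite /softmax; have -> : \sum_(c' < m.+1) w c' * expR (t * b c') =
      expR (t * b c) * \sum_(c' < m.+1) w c' * expR (t * (b c' - b c)).
    by rewrite mulr_sumr; apply: eq_bigr => i _; rewrite mulrCA -expRD mulrBr addrC subrK.
  by rewrite invfM mulrA mulfK // gt_eqF // expR_gt0.
under eq_cvg do rewrite shift.
apply: cvgMl_tmp; apply: cvgV; first by rewrite gt_eqF ?sum_ties_gt0.
apply: cvg_big => [|i _]; first exact: add_continuous.
case: eqP => [->|b_neq].
  by under eq_cvg do rewrite subrr mulr0 expR0 mulr1; apply: cvg_cst.
rewrite -[X in _ --> X](mulr0 (w i)); apply: cvgMl_tmp; apply: cvg_expR_Mneg.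
by rewrite subr_lt0 lt_neqAle (introN eqP b_neq) b_max // -ltnS.
Qed.

Lemma softmax_cvg0 c c_max : (c <= m)%N -> (c_max <= m)%N -> 0 < w c_max ->
  b c < b c_max -> softmax c t @[t --> +oo] --> 0.
Proof.
move=> cm cmax wmax_gt0 b_lt.
apply: (@squeeze_cvgr _ _ _ _ (fun=> 0) (fun t => w c / w c_max * expR (t * (b c - b c_max)))).
- near=> t; rewrite softmax_ge0 //= /softmax.
  have max_gt0 : 0 < w c_max * expR (t * b c_max) by rewrite mulr_gt0 ?expR_gt0.
  apply: le_trans (_ : _ <= w c * expR (t * b c) / (w c_max * expR (t * b c_max))) _.
    rewrite ler_wpM2l ?mulr_ge0 ?expR_ge0 ?w_ge0 // lef_pV2 ?posrE //.
      exact: softmax_num_le_den.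
    exact: lt_le_trans (softmax_num_le_den t cmax).
  by rewrite mulrBr expRB invfM mulrACA.
- exact: cvg_cst.
- rewrite -[X in _ --> X](mulr0 (w c / w c_max)); apply: cvgMl_tmp.
  by apply: cvg_expR_Mneg; rewrite subr_lt0.
Unshelve. all: end_near. Qed.

End Softmax.

Lemma exists_first_bad_pair n (bad : rel 'I_n) (a b : 'I_n) :
  symmetric bad -> irreflexive bad -> bad a b ->
  exists k j : 'I_n, [/\ j < k, bad j k & forall c d : 'I_n, c < k -> d < k -> ~~ bad c d].
Proof.
move=> bad_sym bad_irr bad_ab.
pose has_bad_before := [pred k : 'I_n | [exists j : 'I_n, (j < k) && bad j k]].
have bad_before (c d : 'I_n) : c < d -> bad c d -> has_bad_before d.
  by move=> cd bcd; apply/existsP; exists c; rewrite cd bcd.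
have [k0 bad_k0] : exists k, has_bad_before k.
  case: (ltngtP a b) => [ab|ba|/val_inj eab]; first by exists b; apply: bad_before ab bad_ab.
    by exists a; apply: bad_before ba _; rewrite bad_sym.
  by rewrite eab bad_irr in bad_ab.
case: (arg_minnP val bad_k0) => k /existsP[j /andP[jk bad_jk]] k_min.
exists k, j; split=> // c d ck dk; apply/negP => bad_cd.
case: (ltngtP c d) => [cd|dc|/val_inj ecd]; last by rewrite ecd bad_irr in bad_cd.
  by have := k_min d (bad_before c d cd bad_cd); rewrite leqNgt dk.
by have := k_min c (bad_before d c dc _); rewrite bad_sym leqNgt ck => /(_ bad_cd).
Qed.

(** * Limiting partitions of the shrinkage partition distribution *)

Section ShrinkagePartition.
Import numFieldNormedType.Exports.
Local Open Scope classical_set_scope.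
Local Open Scope ring_scope.
Variables (R : realType) (n : nat) (mu : {ffun 'I_n -> 'I_n}) (s : 'I_n -> bool)
  (sigma : {perm 'I_n}) (psi : R) (prb : nat -> seq nat -> nat -> R).

Definition anchor_mass (k : 'I_n) (P : pred 'I_n) : R :=
  \sum_(j : 'I_n | (j < k)%N) (s (sigma j))%:R * (P j)%:R.

Definition anchor_score (p : {ffun 'I_n -> 'I_n}) (k : 'I_n) (c : nat) : R :=
  (s (sigma k))%:R / (k%:R ^+ 2) *
  (anchor_mass k (fun j => (alloc_label p sigma j == c) && (mu (sigma j) == mu (sigma k))) ^+ 2
   - psi * anchor_mass k (fun j => alloc_label p sigma j == c) ^+ 2).

Lemma anchor_factor_scaled (p : {ffun 'I_n -> 'I_n}) (k : 'I_n) (c : nat) (om : R) :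
  anchor_factor mu (fun i => om * (s i)%:R) sigma psi p k c = expR (om ^+ 3 * anchor_score p k c).
Proof.
rewrite /anchor_factor /anchor_score /anchor_mass; congr expR.
rewrite -!(eq_bigr _ (fun j _ => mulrA _ _ _)) -!mulr_sumr.
set X := \sum_(_ | _) _; set Y := \sum_(_ | _) _.
ring.
Qed.

Lemma sp_pmf_scaled (p : {ffun 'I_n -> 'I_n}) (om : R) :
  sp_pmf mu (fun i => om * (s i)%:R) sigma psi prb p =
  \prod_(k : 'I_n | (0 < k)%N) softmax (n_existing p sigma k) (prb k (alloc_prefix p sigma k))
                                  (anchor_score p k) (alloc_label p sigma k) (om ^+ 3).
Proof.
apply: eq_bigr => k _; rewrite /sp_cond /softmax anchor_factor_scaled.
by congr (_ / _); apply: eq_bigr => c _; rewrite anchor_factor_scaled.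
Qed.

Lemma eq_anchor_mass (k : 'I_n) (P Q : pred 'I_n) :
  (forall j : 'I_n, (j < k)%N -> s (sigma j) -> P j = Q j) -> anchor_mass k P = anchor_mass k Q.
Proof.
move=> PQ; apply: eq_bigr => j jk.
by case sj: (s (sigma j)); [rewrite PQ | rewrite !mul0r].
Qed.

Lemma anchor_mass0 (k : 'I_n) (P : pred 'I_n) :
  (forall j : 'I_n, (j < k)%N -> s (sigma j) -> ~~ P j) -> anchor_mass k P = 0.
Proof.
move=> nP; rewrite (@eq_anchor_mass k P pred0); first by apply: big1 => j _; rewrite mulr0.
by move=> j jk sj; apply/negbTE/nP.
Qed.

Lemma anchor_mass_ge1 (k : 'I_n) (P : pred 'I_n) (j : 'I_n) :
  (j < k)%N -> s (sigma j) -> P j -> 1 <= anchor_mass k P.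
Proof.
move=> jk sj Pj; rewrite /anchor_mass (bigD1 j) //= sj Pj mulr1 lerDl.
by apply: sumr_ge0 => i _; rewrite mulr_ge0 ?ler0n.
Qed.

Hypothesis psi_01 : 0 < psi < 1.

Lemma anchor_score_le_label (p : {ffun 'I_n -> 'I_n}) (k : 'I_n) (c : nat) :
  (forall j : 'I_n, (j < k)%N -> s (sigma j) -> s (sigma k) ->
     (p (sigma j) == p (sigma k)) = (mu (sigma j) == mu (sigma k))) ->
  anchor_score p k c <= anchor_score p k (alloc_label p sigma k).
Proof.
move=> consistent_k; rewrite /anchor_score.
have [sk|_] := boolP (s (sigma k)); last by rewrite !mul0r.
have [->|c_neq] := eqVneq c (alloc_label p sigma k); first exact: lexx.
have X_c : anchor_mass k (fun j => (alloc_label p sigma j == c)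
                                   && (mu (sigma j) == mu (sigma k))) = 0.
  apply: anchor_mass0 => j jk sj; rewrite -consistent_k // -eq_alloc_label.
  by apply: contra c_neq => /andP[/eqP <-]; rewrite eq_sym.
have X_k : anchor_mass k (fun j => (alloc_label p sigma j == alloc_label p sigma k)
                                   && (mu (sigma j) == mu (sigma k))) =
           anchor_mass k (fun j => alloc_label p sigma j == alloc_label p sigma k).
  by apply: eq_anchor_mass => j jk sj; rewrite -consistent_k // -eq_alloc_label andbb.
rewrite X_c X_k; apply: ler_wpM2l; first by rewrite divr_ge0 ?ler0n ?exprn_ge0.
set Yc := anchor_mass k _; set Yk := anchor_mass k _.
have Yc2 : 0 <= Yc ^+ 2 by rewrite sqr_ge0.
have Yk2 : 0 <= Yk ^+ 2 by rewrite sqr_ge0.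
case/andP: psi_01 => psi_gt0 psi_lt1; rewrite expr2 mul0r; nra.
Qed.

Lemma anchor_score_lt_mate (p : {ffun 'I_n -> 'I_n}) (k j : 'I_n) :
  (forall a b : 'I_n, (a < k)%N -> (b < k)%N -> s (sigma a) -> s (sigma b) ->
     (p (sigma a) == p (sigma b)) = (mu (sigma a) == mu (sigma b))) ->
  s (sigma k) -> (j < k)%N -> s (sigma j) -> mu (sigma j) = mu (sigma k) ->
  p (sigma j) != p (sigma k) ->
  anchor_score p k (alloc_label p sigma k) < anchor_score p k (alloc_label p sigma j).
Proof.
move=> consistent_prefix sk jk sj mu_jk p_jk; rewrite /anchor_score sk.
have X_k : anchor_mass k (fun i => (alloc_label p sigma i == alloc_label p sigma k)
                                   && (mu (sigma i) == mu (sigma k))) = 0.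
  apply: anchor_mass0 => i ik si; rewrite -mu_jk -consistent_prefix // -eq_alloc_label.
  by apply: contra p_jk => /andP[/eqP lab_ik /eqP lab_ij]; rewrite -eq_alloc_label -lab_ik lab_ij.
have X_j : anchor_mass k (fun i => (alloc_label p sigma i == alloc_label p sigma j)
                                   && (mu (sigma i) == mu (sigma k))) =
           anchor_mass k (fun i => alloc_label p sigma i == alloc_label p sigma j).
  apply: eq_anchor_mass => i ik si.
  by rewrite -mu_jk -consistent_prefix // -eq_alloc_label andbb.
have Y_j : 1 <= anchor_mass k (fun i => alloc_label p sigma i == alloc_label p sigma j).
  exact: anchor_mass_ge1 jk sj _.
rewrite X_k X_j ltr_pM2l ?divr_gt0 ?exprn_gt0 ?ltr0n ?(leq_ltn_trans _ jk) //.
set Yk := anchor_mass k _; set Yj := anchor_mass k _ in Y_j *.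
case/andP: psi_01 => psi_gt0 psi_lt1.
have psi_Yk : 0 <= psi * Yk ^+ 2 by rewrite mulr_ge0 ?sqr_ge0 ?ltW.
have Yj2 : 1 <= Yj ^+ 2 by rewrite expr2; nra.
rewrite expr0n /=; nra.
Qed.

Lemma anchor_score_lt_new (p : {ffun 'I_n -> 'I_n}) (k j : 'I_n) :
  s (sigma k) -> (j < k)%N -> s (sigma j) -> p (sigma j) = p (sigma k) ->
  (forall i : 'I_n, (i < k)%N -> s (sigma i) -> mu (sigma i) != mu (sigma k)) ->
  anchor_score p k (alloc_label p sigma k) < anchor_score p k (n_existing p sigma k).
Proof.
move=> sk jk sj p_jk no_mate; rewrite /anchor_score sk.
have no_label c : anchor_mass k (fun i => (alloc_label p sigma i == c)
                                       && (mu (sigma i) == mu (sigma k))) = 0.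
  by apply: anchor_mass0 => i ik si; rewrite negb_and no_mate ?orbT.
have Y_new : anchor_mass k (fun i => alloc_label p sigma i == n_existing p sigma k) = 0.
  by apply: anchor_mass0 => i ik _; rewrite ltn_eqF ?alloc_label_lt.
have Y_k : 1 <= anchor_mass k (fun i => alloc_label p sigma i == alloc_label p sigma k).
  by apply: anchor_mass_ge1 jk sj _; rewrite /= eq_alloc_label p_jk.
rewrite !no_label Y_new ltr_pM2l ?divr_gt0 ?exprn_gt0 ?ltr0n ?(leq_ltn_trans _ jk) //.
set Yk := anchor_mass k _ in Y_k *.
have Yk2 : 1 <= Yk ^+ 2 by rewrite expr2; nra.
case/andP: psi_01 => psi_gt0 _.
by rewrite expr0n /= mulr0 subr0 sub0r oppr_lt0 mulr_gt0 // (lt_le_trans ltr01 Yk2).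
Qed.

Hypothesis prb_valid : valid_baseline prb sigma.
Hypothesis pmf_pos : forall p : {ffun 'I_n -> 'I_n}, canon_part p -> 0 < baseline_pmf prb sigma p.

Lemma prb_ge0 (p : {ffun 'I_n -> 'I_n}) (k : 'I_n) (c : nat) :
  canon_part p -> (0 < k)%N -> (c <= n_existing p sigma k)%N ->
  0 <= prb k (alloc_prefix p sigma k) c.
Proof. by move=> cp k_gt0; case: (prb_valid cp k_gt0) => ge0 _; apply: ge0. Qed.

Lemma prb_label_gt0 (p : {ffun 'I_n -> 'I_n}) (k : 'I_n) : canon_part p -> (0 < k)%N ->
  0 < prb k (alloc_prefix p sigma k) (alloc_label p sigma k).
Proof.
move=> cp k_gt0; rewrite lt_def prb_ge0 ?alloc_label_le // andbT.
apply: contraTneq (pmf_pos cp) => prb0.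
by rewrite /baseline_pmf (bigD1 k) //= prb0 mul0r ltxx.
Qed.

(* Agrees with [p] on the first [k] allocations, puts [sigma k] into cluster [v] and
   every later item into a singleton; the values [n + j] are fresh as [p] is ['I_n]-valued. *)
Definition extend_prefix (p : {ffun 'I_n -> 'I_n}) (k : 'I_n) (v : nat) (x : 'I_n) : nat :=
  let j := (sigma^-1)%g x in
  if (j < k)%N then val (p x) else if j == k then v else (n + j)%N.

Lemma extend_prefix_kernel (p : {ffun 'I_n -> 'I_n}) (k : 'I_n) (v : nat) :
  forall a b : 'I_n, (a < k)%N -> (b < k)%N ->
  (p (sigma a) == p (sigma b)) =
  (canonize (extend_prefix p k v) (sigma a) == canonize (extend_prefix p k v) (sigma b)).
Proof. by move=> a b ak bk; rewrite eq_canonize /extend_prefix !permK ak bk val_eqE. Qed.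

Lemma prb_extend_gt0 (p : {ffun 'I_n -> 'I_n}) (k : 'I_n) (v : nat) :
  canon_part p -> (0 < k)%N ->
  0 < prb k (alloc_prefix p sigma k) (alloc_label (canonize (extend_prefix p k v)) sigma k).
Proof.
move=> cp k_gt0; rewrite (alloc_prefix_prefix (@extend_prefix_kernel p k v)).
exact: prb_label_gt0 (canon_part_canonize _) k_gt0.
Qed.

Lemma prb_new_gt0 (p : {ffun 'I_n -> 'I_n}) (k : 'I_n) : canon_part p -> (0 < k)%N ->
  0 < prb k (alloc_prefix p sigma k) (n_existing p sigma k).
Proof.
move=> cp k_gt0; have := prb_extend_gt0 (n + k) cp k_gt0.
rewrite alloc_label_new => [|j jk].
  by rewrite /n_existing (alloc_prefix_prefix (@extend_prefix_kernel p k (n + k))).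
rewrite eq_canonize /extend_prefix !permK jk ltnn eqxx.
by rewrite neq_ltn (leq_trans (ltn_ord _) (leq_addr _ _)).
Qed.

Lemma prb_mate_gt0 (p : {ffun 'I_n -> 'I_n}) (k j : 'I_n) :
  canon_part p -> (0 < k)%N -> (j < k)%N ->
  0 < prb k (alloc_prefix p sigma k) (alloc_label p sigma j).
Proof.
move=> cp k_gt0 jk; have := prb_extend_gt0 (val (p (sigma j))) cp k_gt0.
set q := canonize _.
rewrite (alloc_label_prefix (@extend_prefix_kernel p k (val (p (sigma j)))) jk).
suff -> : alloc_label q sigma j = alloc_label q sigma k by [].
by apply/eqP; rewrite eq_alloc_label eq_canonize /extend_prefix !permK jk ltnn eqxx.
Qed.

Lemma exists_better_label (p : {ffun 'I_n -> 'I_n}) : canon_part p -> ~~ consistent s mu p ->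
  exists (k : 'I_n) (c : nat), [/\ (0 < k)%N, (c <= n_existing p sigma k)%N,
    0 < prb k (alloc_prefix p sigma k) c &
    anchor_score p k (alloc_label p sigma k) < anchor_score p k c].
Proof.
move=> cp inconsistent.
pose bad a b := [&& s (sigma a), s (sigma b) &
  (p (sigma a) == p (sigma b)) != (mu (sigma a) == mu (sigma b))].
have bad_sym : symmetric bad by move=> a b; rewrite /bad andbCA (eq_sym (p _)) (eq_sym (mu _)).
have bad_irr : irreflexive bad by move=> a; rewrite /bad !eqxx /= !andbF.
have [x [y bad_xy]] : exists x y, bad ((sigma^-1)%g x) ((sigma^-1)%g y).
  move: inconsistent; rewrite negb_forall => /existsP[x]; rewrite negb_forall => /existsP[y].
  rewrite negb_imply => /andP[sx]; rewrite negb_imply => /andP[sy viol].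
  by exists x, y; rewrite /bad !permKV sx sy.
have [k [j [jk /and3P[sj sk viol] no_bad_before]]] := exists_first_bad_pair bad_sym bad_irr bad_xy.
have k_gt0 : (0 < k)%N by apply: leq_ltn_trans jk.
have consistent_prefix (a b : 'I_n) : (a < k)%N -> (b < k)%N -> s (sigma a) -> s (sigma b) ->
    (p (sigma a) == p (sigma b)) = (mu (sigma a) == mu (sigma b)).
  by move=> ak bk sa sb; move: (no_bad_before a b ak bk); rewrite /bad sa sb negbK => /eqP.
exists k.
case: (boolP [exists i : 'I_n, [&& (i < k)%N, s (sigma i) & mu (sigma i) == mu (sigma k)]]).
  move=> /existsP[i /and3P[ik si /eqP mu_ik]]; exists (alloc_label p sigma i).
  split=> //; [exact/ltnW/alloc_label_lt | exact: prb_mate_gt0 |].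
  apply: anchor_score_lt_mate => //; apply/negP => /eqP p_ik.
  by move: viol; rewrite -p_ik consistent_prefix // mu_ik eqxx.
rewrite negb_exists => /forallP no_mate; exists (n_existing p sigma k).
split=> //; first exact: prb_new_gt0.
apply: (anchor_score_lt_new sk jk sj) => [|i ik si].
  have /negbTE mu_jk : ~~ (mu (sigma j) == mu (sigma k)) by move: (no_mate j); rewrite jk sj.
  by apply/eqP; move: viol; rewrite mu_jk eqbF_neg negbK.
by move: (no_mate i); rewrite ik si.
Qed.

Lemma limiting_of_consistent (p : {ffun 'I_n -> 'I_n}) :
  canon_part p -> consistent s mu p -> limiting mu s sigma psi prb p.
Proof.
move=> cp /consistentP C.
exists (\prod_(k : 'I_n | (0 < k)%N)
  softmax_lim (n_existing p sigma k) (prb k (alloc_prefix p sigma k)) (anchor_score p k)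
    (alloc_label p sigma k)); split.
  apply/prodf_neq0 => k k_gt0.
  by rewrite softmax_lim_neq0 ?alloc_label_le ?prb_label_gt0 // => c; apply: prb_ge0.
under eq_cvg do rewrite sp_pmf_scaled.
apply: cvg_big => [|k k_gt0]; first exact: mul_continuous.
apply: (cvg_pinfty_comp_expr (k := 3)) => //.
apply: softmax_cvg_argmax; rewrite ?alloc_label_le ?prb_label_gt0 //.
  by move=> c; apply: prb_ge0.
by move=> c _; apply: anchor_score_le_label => j jk sj sk; apply: C.
Qed.

Lemma sp_pmf_cvg0 (p : {ffun 'I_n -> 'I_n}) : canon_part p -> ~~ consistent s mu p ->
  sp_pmf mu (fun i => om * (s i)%:R) sigma psi prb p @[om --> +oo] --> 0.
Proof.
move=> cp inconsistent.
have [k [c [k_gt0 cm prb_c score_lt]]] := exists_better_label cp inconsistent.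
pose factor (i : 'I_n) om := softmax (n_existing p sigma i) (prb i (alloc_prefix p sigma i))
  (anchor_score p i) (alloc_label p sigma i) (om ^+ 3).
have factor01 (i : 'I_n) om : (0 < i)%N -> 0 <= factor i om <= 1.
  move=> i_gt0; rewrite softmax_ge0 ?softmax_le1 ?alloc_label_le // => c'; exact: prb_ge0.
under eq_cvg do rewrite sp_pmf_scaled.
apply: (@squeeze_cvgr _ _ _ _ (fun=> 0) (factor k)).
- near=> om; rewrite prodr_ge0 => [|i i_gt0]; last by case/andP: (factor01 i om i_gt0).
  rewrite (bigD1 k) //= ler_piMr //; first by case/andP: (factor01 k om k_gt0).
  by apply: prodr_ile1 => i /andP[i_gt0 _]; apply: factor01.
- exact: cvg_cst.
apply: (cvg_pinfty_comp_expr (k := 3)) => //.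
apply: (softmax_cvg0 _ (alloc_label_le p sigma k) cm prb_c score_lt) => c'; exact: prb_ge0.
Unshelve. all: end_near. Qed.

Lemma limitingE (p : {ffun 'I_n -> 'I_n}) :
  canon_part p -> limiting mu s sigma psi prb p <-> consistent s mu p.
Proof.
move=> cp; split=> [[l [l_neq0 cvg_l]]|]; last exact: limiting_of_consistent.
apply/negPn/negP => inconsistent; move: l_neq0.
rewrite -(cvg_lim (@norm_hausdorff _ _) cvg_l).
by rewrite (cvg_lim (@norm_hausdorff _ _) (sp_pmf_cvg0 cp inconsistent)) eqxx.
Qed.

End ShrinkagePartition.

Unset Implicit Arguments.
Local Open Scope ring_scope.

Theorem theorem6 (R : realType) (n : nat) (mu : {ffun 'I_n -> 'I_n})
  (s : 'I_n -> bool) (sigma : {perm 'I_n}) (psi : R)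
  (prb : nat -> seq nat -> nat -> R) :
  canon_part mu ->
  valid_baseline prb sigma ->
  (forall p : {ffun 'I_n -> 'I_n}, canon_part p -> 0 < baseline_pmf prb sigma p) ->
  0 < psi < 1 ->
  let a := #|[set i : 'I_n | ~~ s i]| in
  let b := #|[set mu i | i in [set i : 'I_n | s i]]| in
  #|[set p : {ffun 'I_n -> 'I_n} | canon_part p && `[< limiting mu s sigma psi prb p >]]|
    = ext_bell a b.
Proof.
move=> _ prb_valid pmf_pos psi_01 a b.
have -> : [set p | canon_part p && `[< limiting mu s sigma psi prb p >]] = consistent_parts s mu.
  apply/setP => p; rewrite !inE; case cp: (canon_part p) => //=.
  by rewrite (asbool_equiv_eq (limitingE mu s psi_01 prb_valid pmf_pos cp)) asboolb.
exact: card_consistent_parts.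
Qed.
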